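(* Let $\Omega$ be a non-empty bounded open subset of $\mathbf{R}^n$ and let $f:\Omega\to\mathbf{R}^n$ be a $C^1$ function. Then at least one of the following holds: (e1) $f$ satisfies the convex hull-like property in $\Omega$; (e2) there exists a non-empty open set $X\subseteq\Omega$ with $\overline{X}\subseteq\Omega$ such that for every continuous function $g:\Omega\to\mathbf{R}^n$ which is $C^1$ in $X$, there exists $\tilde\lambda\ge0$ such that for each $\lambda>\tilde\lambda$ one has $\det(J_{g+\lambda f}(\hat x))=0$ for some $\hat x\in X$.
   Context: $\det(J_h(x))$ denotes the Jacobian determinant of a $C^1$ map $h$ at $x$. A function $\psi:\mathbf{R}^n\to\mathbf{R}$ is quasi-convex if for each $r\in\mathbf{R}$ the set $\psi^{-1}(]-\infty,r])$ is convex. A continuous function $f:\Omega\to\mathbf{R}^n$ satisfies the convex hull-like property in $\Omega$ if for every continuous quasi-convex $\psi:\mathbf{R}^n\to\mathbf{R}$ there exists $x^*\in\partial\Omega$ such that $\limsup_{x\to x^*,\,x\in\Omega}\psi(f(x))=\sup_{x\in\Omega}\psi(f(x))$. *)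

From HB Require Import structures.
From mathcomp Require Import all_boot all_order all_algebra.
From mathcomp Require Import all_classical all_reals all_analysis.
Set Implicit Arguments. Unset Strict Implicit. Unset Printing Implicit Defensive.
Import Order.TTheory GRing.Theory Num.Theory.
Import numFieldNormedType.Exports.
Local Open Scope classical_set_scope.
Local Open Scope ring_scope.

Definition boundary (R : realType) (n : nat) (A : set 'rV[R]_n) : set 'rV[R]_n :=
  closure A `\` A°.

Definition quasi_convex (R : realType) (n : nat) (psi : 'rV[R]_n -> R) : Prop :=
  forall (r : R) (x y : 'rV[R]_n) (t : R), 0 <= t -> t <= 1 ->
    psi x <= r -> psi y <= r -> psi (t *: x + (1 - t) *: y) <= r.

Definition C1_on (R : realType) (n : nat) (A : set 'rV[R]_n)
    (h : 'rV[R]_n -> 'rV[R]_n) : Prop :=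
  (forall x, A x -> differentiable h x) /\
  (forall x, A x -> {for x, continuous (fun y => jacobian h y)}).

Definition continuous_on (R : realType) (n : nat) (A : set 'rV[R]_n)
    (h : 'rV[R]_n -> 'rV[R]_n) : Prop :=
  forall x, A x -> {for x, continuous h}.

Definition convex_hull_like (R : realType) (n : nat) (Omega : set 'rV[R]_n)
    (f : 'rV[R]_n -> 'rV[R]_n) : Prop :=
  forall psi : 'rV[R]_n -> R, continuous psi -> quasi_convex psi ->
    exists2 xs, boundary Omega xs &
      limf_esup (fun x => ((psi (f x))%:E)%E) (within Omega (nbhs xs)) =
      ereal_sup [set ((psi (f x))%:E)%E | x in Omega].

(* If f fails the convex hull-like property, some continuous quasi-convex psi
   has sup (psi o f) attained as a limsup at no boundary point; by compactness
   of the closure of Omega, some superlevel set {psi o f > r} with r below that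
   supremum then has its closure inside Omega.  Separating f x0, for x0 in that
   set, from the convex sublevel set {psi <= r} by a hyperplane with normal u
   (through the nearest point) yields X = {x | c < f x . u}: its closure lies in
   Omega and f . u stays a fixed delta below f x0 . u on its boundary.  Hence for
   large lambda the maximum of (g + lambda f) . u over the closure of X is
   attained inside X, where u is orthogonal to the range of the Jacobian of
   g + lambda f, which is therefore singular. *)

From HB Require Import structures.
From mathcomp Require Import all_boot all_order all_algebra.
From mathcomp Require Import all_classical all_reals all_analysis.
From mathcomp Require Import ring lra.
Import Order.TTheory GRing.Theory Num.Theory.
Import numFieldNormedType.Exports.
Local Open Scope classical_set_scope.
Local Open Scope ring_scope.

Section DotProduct.
Context {R : realType} {n : nat}.
Implicit Types (y z u : 'rV[R]_n).

Definition dotv y u : R := \sum_i y ord0 i * u ord0 i.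

Lemma dotvDl y z u : dotv (y + z) u = dotv y u + dotv z u.
Proof. by rewrite /dotv -big_split; apply: eq_bigr => i _; rewrite mxE mulrDl. Qed.

Lemma dotvZl (a : R) y u : dotv (a *: y) u = a * dotv y u.
Proof. by rewrite /dotv mulr_sumr; apply: eq_bigr => i _; rewrite mxE mulrA. Qed.

Lemma dotvBl y z u : dotv (y - z) u = dotv y u - dotv z u.
Proof. by rewrite dotvDl -scaleN1r dotvZl mulN1r. Qed.

Lemma dotvC y u : dotv y u = dotv u y.
Proof. by apply: eq_bigr => i _; rewrite mulrC. Qed.

Lemma dotvZr (a : R) y u : dotv u (a *: y) = a * dotv u y.
Proof. by rewrite dotvC dotvZl dotvC. Qed.

Lemma dotvBr y z u : dotv u (y - z) = dotv u y - dotv u z.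
Proof. by rewrite dotvC dotvBl !(dotvC u). Qed.

Lemma dotv_sqrBZ y u (t : R) :
  dotv (y - t *: u) (y - t *: u) = dotv y y - 2 * t * dotv u y + t ^+ 2 * dotv u u.
Proof. by rewrite !(dotvBl, dotvBr, dotvZl, dotvZr) (dotvC y u); ring. Qed.

Lemma sqr_coord_le_dotv y i : y ord0 i ^+ 2 <= dotv y y.
Proof.
rewrite /dotv (bigD1 i) //= expr2 lerDl.
by apply: sumr_ge0 => j _; rewrite -expr2 sqr_ge0.
Qed.

Lemma dotv_ge0 y : 0 <= dotv y y.
Proof. by apply: sumr_ge0 => i _; rewrite -expr2 sqr_ge0. Qed.

Lemma dotv_gt0 y : y != 0 -> 0 < dotv y y.
Proof.
apply: contraNT; rewrite -leNgt => y_le0; apply/eqP/rowP => i.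
rewrite mxE; apply/eqP; rewrite -sqrf_eq0 eq_le sqr_ge0 andbT.
exact: le_trans (sqr_coord_le_dotv y i) y_le0.
Qed.

Lemma dotv_continuous (T : topologicalType) (F G : T -> 'rV[R]_n) x :
  {for x, continuous F} -> {for x, continuous G} ->
  {for x, continuous (fun t => dotv (F t) (G t))}.
Proof.
move=> cF cG; apply: (@cvg_big R _ +%R 0 xpredT add_continuous) => // i _.
have coord_i : continuous (fun M : 'rV[R]_n => M ord0 i) by exact: coord_continuous.
by apply: cvgM; [exact: continuous_comp cF (coord_i _)|
                 exact: continuous_comp cG (coord_i _)].
Qed.

End DotProduct.

Lemma le0_of_linear_le_quadratic {R : realFieldType} {a W : R} : 0 <= W ->
  (forall t, 0 < t -> t < 1 -> 2 * t * a <= t ^+ 2 * W) -> a <= 0.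
Proof.
move=> W_ge0 le_aW; rewrite leNgt; apply/negP => a_gt0.
have aW_gt0 : 0 < 2 * a + W by lra.
pose t := a / (2 * a + W).
have tE : t * (2 * a + W) = a by rewrite mulfVK ?gt_eqF.
have t_gt0 : 0 < t by rewrite divr_gt0.
have t_lt1 : t < 1 by rewrite ltr_pdivrMr // mul1r; lra.
have := le_aW t t_gt0 t_lt1; nra.
Qed.

Section NearestPoint.
Context {R : realType} {n : nat}.
Implicit Types (S : set 'rV[R]_n) (p q y : 'rV[R]_n).

Let sqdist p y := dotv (p - y) (p - y).

Lemma exists_nearest_point {S} p : closed S -> S !=set0 ->
  exists2 q, S q & forall y, S y -> sqdist p q <= sqdist p y.
Proof.
move=> clS [k0 Sk0]; pose D := sqdist p k0.
pose K := S `&` [set y | sqdist p y <= D].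
have c_sqdist : continuous (sqdist p).
  have c_sub : continuous (fun y => p - y).
    by move=> x; apply: continuousB => //; exact: cst_continuous.
  by move=> x; exact: dotv_continuous (c_sub x) (c_sub x).
have clK : closed K.
  exact: closedI clS (proj1 (continuous_closedP _) c_sqdist _ (@closed_le _ D)).
have D_ge0 : 0 <= D by exact: dotv_ge0.
pose box i := `[p ord0 i - (1 + D), p ord0 i + (1 + D)]%classic.
have cK : compact K.
  have box_compact : compact [set y : 'rV[R]_n | forall i, box i (y ord0 i)].
    by apply: rV_compact => i; exact: segment_compact.
  apply: (subclosed_compact clK box_compact).
  move=> y [_ dy] i; have := sqr_coord_le_dotv (p - y) i.
  rewrite !mxE => le_pyD; have {le_pyD dy} := le_trans le_pyD dy.
  by rewrite /box /= in_itv /= => h; apply/andP; split; nra.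
have [q /set_mem [Sq dq] qmin] :=
  EVT_min_rV (ex_intro _ k0 (conj Sk0 (lexx D))) cK (continuous_subspaceT c_sqdist).
exists q => // y Sy; have [dy|dy] := leP (sqdist p y) D.
  by apply: qmin; apply: mem_set.
exact: le_trans dq (ltW dy).
Qed.

Lemma nearest_point_obtuse {S p q} :
  (forall x y t, S x -> S y -> 0 <= t -> t <= 1 -> S (t *: x + (1 - t) *: y)) ->
  S q -> (forall y, S y -> sqdist p q <= sqdist p y) ->
  forall y, S y -> dotv (y - q) (p - q) <= 0.
Proof.
move=> convS Sq qmin y Sy.
apply: (le0_of_linear_le_quadratic (dotv_ge0 (y - q))) => t t_gt0 t_lt1.
have := qmin _ (convS _ _ t Sy Sq (ltW t_gt0) (ltW t_lt1)); rewrite /sqdist.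
have -> : p - (t *: y + (1 - t) *: q) = (p - q) - t *: (y - q).
  by apply/rowP => i; rewrite !mxE; ring.
rewrite dotv_sqrBZ; lra.
Qed.

End NearestPoint.

Lemma quasi_convex_separation {R : realType} {n} {psi : 'rV[R]_n -> R} {r : R}
    {p : 'rV[R]_n} : (0 < n)%N ->
  continuous psi -> quasi_convex psi -> r < psi p ->
  exists u c, [/\ u != 0, c < dotv p u & forall y, psi y <= r -> dotv y u <= c].
Proof.
move=> n_gt0 c_psi qc_psi psi_p; pose S := [set y | psi y <= r].
have [[k0 Sk0]|S0] := pselect (S !=set0); last first.
  have one_neq0 : const_mx 1 != 0 :> 'rV[R]_n.
    by apply/eqP => /rowP /(_ (Ordinal n_gt0)); rewrite !mxE; exact/eqP/oner_neq0.
  exists (const_mx 1), (dotv p (const_mx 1) - 1); split; first by [].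
    by rewrite ltrBlDr ltrDl.
  by move=> y Sy; exfalso; apply: S0; exists y.
have clS : closed S := proj1 (continuous_closedP _) c_psi _ (@closed_le _ r).
have [q Sq qmin] := exists_nearest_point p clS (ex_intro _ k0 Sk0).
have pq : p - q != 0.
  by rewrite subr_eq0; apply: contraTneq psi_p => ->; rewrite -leNgt.
exists (p - q), (dotv q (p - q)); split => //.
- by rewrite -subr_gt0 -dotvBl dotv_gt0.
- have convS x z t : S x -> S z -> 0 <= t -> t <= 1 -> S (t *: x + (1 - t) *: z).
    by move=> Sx Sz t_ge0 t_le1; exact: qc_psi.
  move=> y Sy; rewrite -subr_le0 -dotvBl.
  exact: nearest_point_obtuse convS Sq qmin y Sy.
Qed.

Lemma dnbhs0_ex_pm {R : realType} {P : R -> Prop} :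
  (\forall t \near 0^', P t) -> exists2 e : R, 0 < e & P e /\ P (- e).
Proof.
move=> /nbhs_ballP[e e_gt0 Pe]; have e2_gt0 : 0 < e / 2 by rewrite divr_gt0.
exists (e / 2) => //; split; apply: Pe; rewrite ?oppr_eq0 ?gt_eqF //.
- by rewrite /ball /= sub0r normrN gtr0_norm //; lra.
- by rewrite /ball /= sub0r opprK gtr0_norm //; lra.
Qed.

Lemma difference_quotient_lim_at_max {R : realType} (phi : R -> R) {L : R} :
  (\forall t \near 0^', phi t <= phi 0) ->
  (fun t => t^-1 * (phi t - phi 0)) @ 0^' --> L -> L = 0.
Proof.
move=> phi_max phi_L; have [L_lt0|L_gt0|//] := ltgtP L 0.
- have [e e_gt0 [_ [qe_lt0 max_e]]] :=
    dnbhs0_ex_pm (filterI phi_max (@cvgr_lt R R _ _ _ _ phi_L 0 L_lt0)).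
  have : (- e)^-1 < 0 by rewrite invr_lt0 oppr_lt0.
  nra.
- have [e e_gt0 [[max_e qe_gt0] _]] :=
    dnbhs0_ex_pm (filterI phi_max (@cvgr_gt R R _ _ _ _ phi_L 0 L_gt0)).
  have : 0 < e^-1 by rewrite invr_gt0.
  nra.
Qed.

Lemma jacobian_dotv_eq0_at_max {R : realType} {n} {h : 'rV[R]_n -> 'rV[R]_n}
    {X : set 'rV[R]_n} {c u : 'rV[R]_n} :
  open X -> X c -> differentiable h c ->
  (forall y, X y -> dotv (h y) u <= dotv (h c) u) ->
  forall v, dotv (v *m jacobian h c) u = 0.
Proof.
move=> oX Xc dh hmax v; rewrite -deriveEjacobian //.
pose phi t := dotv (h (t *: v + c)) u.
have phi0 : phi 0 = dotv (h c) u by rewrite /phi scale0r add0r.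
apply: (difference_quotient_lim_at_max phi).
- have line_c : (fun t : R => t *: v + c) @ 0 --> 0 *: v + c.
    by apply: cvgD; [apply: cvgZl|exact: cvg_cst].
  rewrite scale0r add0r in line_c.
  have near_X : \forall t \near 0^', X (t *: v + c).
    by apply: cvg_within; apply: line_c; apply: open_nbhs_nbhs; split.
  by apply: filterS near_X => t Xt; rewrite phi0; exact: hmax.
- have -> : (fun t => t^-1 * (phi t - phi 0)) =
      (fun w => dotv w u) \o (fun t : R => t^-1 *: (h (t *: v + c) - h c)).
    by apply/funext => t; rewrite /= phi0 dotvZl dotvBl.
  have c_dotu : continuous (fun w : 'rV[R]_n => dotv w u).
    by move=> w; apply: dotv_continuous => //; exact: cst_continuous.
  exact: cvg_comp (@diff_derivable _ _ _ h c v dh) (c_dotu _).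
Qed.

Lemma det_eq0_of_dotv_kernel {R : realType} {n} {J : 'M[R]_n} {u : 'rV[R]_n} :
  u != 0 -> (forall v, dotv (v *m J) u = 0) -> \det J = 0.
Proof.
move=> u_neq0 Ju; rewrite -det_tr; apply/eqP/det0P; exists u => //.
apply/rowP => i; rewrite [RHS]mxE -(Ju (delta_mx ord0 i)) -rowE mxE.
by apply: eq_bigr => j _; rewrite !mxE mulrC.
Qed.

Lemma exists_argmax_in_for_large_lambda {R : realType} {T : topologicalType}
    {X : set T} {F G : T -> R} {x0 : T} {delta : R} :
  compact (closure X) -> X x0 -> 0 < delta ->
  {within closure X, continuous F} -> {within closure X, continuous G} ->
  (forall y, closure X y -> ~ X y -> F y + delta <= F x0) ->
  exists lt : R, 0 <= lt /\ forall lam : R, lt < lam ->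
    exists2 c, X c & forall y, X y -> G y + lam * F y <= G c + lam * F c.
Proof.
move=> cK Xx0 delta_gt0 cF cG F_boundary.
have K0 : closure X !=set0 by exists x0; exact: subset_closure.
have x0K : x0 \in closure X by apply/mem_set/subset_closure.
have [c1 c1K G_max] := compact_EVT_max K0 cK cG.
have [c2 c2K G_min] := compact_EVT_min K0 cK cG.
have G_osc_ge0 : 0 <= G c1 - G c2 by rewrite subr_ge0; exact: G_max.
(* Past this threshold, the lead lam * delta of x0 over the boundary of X
   exceeds the oscillation of G on the closure of X. *)
exists ((G c1 - G c2) / delta); split; first by rewrite divr_ge0 // ltW.
move=> lam lam_gt; rewrite ltr_pdivrMr // in lam_gt.
have cH : {within closure X, continuous (fun y => G y + lam * F y)}.
  move=> y; apply: cvgD; first exact: cG.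
  by apply: cvgM; [exact: cvg_cst|exact: cF].
have [c cX H_max] := compact_EVT_max K0 cK cH.
exists c; last by move=> y Xy; apply: H_max; apply/mem_set/subset_closure.
apply: contrapT => Xc_false.
have := F_boundary c (set_mem cX) Xc_false.
have := H_max x0 x0K; have := G_max c cX; have := G_min x0 x0K.
nra.
Qed.

Lemma det_jacobian_eq0_for_large_lambda {R : realType} {n}
    {Omega X : set 'rV[R]_n} {f : 'rV[R]_n -> 'rV[R]_n} (u x0 : 'rV[R]_n) (delta : R) :
  open X -> X x0 -> closure X `<=` Omega -> bounded_set Omega -> u != 0 -> 0 < delta ->
  continuous_on Omega f -> (forall x, X x -> differentiable f x) ->
  (forall y, closure X y -> ~ X y -> dotv (f y) u + delta <= dotv (f x0) u) ->
  forall g : 'rV[R]_n -> 'rV[R]_n, continuous_on Omega g -> C1_on X g ->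
    exists lt : R, 0 <= lt /\ forall lam : R, lt < lam ->
      exists2 xh, X xh & \det (jacobian (fun x => g x + lam *: f x) xh) = 0.
Proof.
move=> oX Xx0 clX_Omega bOmega u_neq0 delta_gt0 cf df f_boundary g cg [dg _].
have cK : compact (closure X).
  apply: bounded_closed_compact; last exact: closed_closure.
  by move: bOmega; apply: sub_boundedr => P HP x /clX_Omega; exact: HP.
have dotu_within h : continuous_on Omega h ->
    {within closure X, continuous (fun y => dotv (h y) u)}.
  move=> ch; apply: continuous_in_subspaceT => x /set_mem /clX_Omega Ox.
  by apply: dotv_continuous; [exact: ch|exact: cst_continuous].
have [lt [lt_ge0 lt_max]] := exists_argmax_in_for_large_lambda
  cK Xx0 delta_gt0 (dotu_within f cf) (dotu_within g cg) f_boundary.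
exists lt; split => // lam /lt_max[c Xc c_max]; exists c => //.
apply: (det_eq0_of_dotv_kernel u_neq0).
apply: (jacobian_dotv_eq0_at_max oX Xc).
  by apply: differentiableD; [exact: dg|apply: differentiableZ; exact: df].
by move=> y Xy; rewrite !(dotvDl, dotvZl); exact: c_max.
Qed.

Section SuperlevelSets.
Context {T : topologicalType} {R : realType}.
Context {Omega : set T} (F : T -> R) {x00 : T}.
Hypothesis Omega_x00 : Omega x00.

Let s := ereal_sup [set (F x)%:E | x in Omega]%E.
Let A r := [set x | Omega x /\ r < F x].

Lemma superlevel_antimono {r r'} : r <= r' -> A r' `<=` A r.
Proof. by move=> le_rr' x [Ox r'x]; split => //; exact: le_lt_trans r'x. Qed.

Lemma lt_sup_minus1 : ((F x00 - 1)%:E < s)%E.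
Proof.
apply: (@lt_le_trans _ _ (F x00)%:E); first by rewrite lte_fin ltrBlDr ltrDl.
by apply: ereal_sup_ubound; exists x00.
Qed.

Lemma limf_esup_eq_sup y : (forall r, (r%:E < s)%E -> closure (A r) y) ->
  limf_esup (fun x => (F x)%:E) (within Omega (nbhs y)) = s.
Proof.
move=> yA; apply/eqP; rewrite eq_le; apply/andP; split.
  by apply: ereal_inf_lbound; exists Omega => //; exact: withinT.
apply/ereal_infP => _ [V OV <-]; rewrite leNgt; apply/negP => supV_lt.
have [r [rs supV_le]] :
    exists r, (r%:E < s /\ ereal_sup [set (F x)%:E | x in V] <= r%:E)%E.
  move: supV_lt; case: (ereal_sup _) => [r' | |] supV_lt.
  - by exists r'.
  - by move: supV_lt; rewrite ltNge leey.
  - by exists (F x00 - 1); rewrite leNye; split => //; exact: lt_sup_minus1.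
have [x [[Ox rx] Vx]] := yA r rs _ OV.
have : ((F x)%:E <= r%:E)%E.
  by apply: le_trans supV_le; apply: ereal_sup_ubound; exists x => //; exact: Vx.
by rewrite lee_fin leNgt rx.
Qed.

Lemma superlevel_closures_meet_outside : open Omega -> compact (closure Omega) ->
  (forall r, (r%:E < s)%E -> exists y, closure (A r) y /\ ~ Omega y) ->
  exists2 y, ~ Omega y & forall r, (r%:E < s)%E -> closure (A r) y.
Proof.
move=> oOmega cK A_out; pose D r := (r%:E < s)%E.
pose B r := closure (A r) `&` ~` Omega.
have FB : ProperFilter (filter_from D B).
  apply: filter_from_proper; last by move=> r /A_out[y]; exists y.
  apply: filter_from_filter; first by exists (F x00 - 1); exact: lt_sup_minus1.
  move=> i j Di Dj; wlog le_ij : i j Di Dj / i <= j.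
    move=> wlog_ij; have [|/ltW] := leP i j; first exact: wlog_ij.
    by move=> /(wlog_ij _ _ Dj Di)[k Dk kB]; exists k => // x /kB[].
  exists j => // x [clx nOx]; split; split => //.
  exact: closure_subset (superlevel_antimono le_ij) _ clx.
have FK : filter_from D B (closure Omega).
  exists (F x00 - 1); first exact: lt_sup_minus1.
  by move=> y [cy _]; apply: closure_subset cy => x [].
have [y [_ cly]] := cK _ FB FK.
have yB r : D r -> B r y.
  move=> Dr; have clB : closed (B r).
    by apply: closedI; [exact: closed_closure|exact: open_closedC].
  rewrite (proj1 (closure_id _) clB) => N Ny.
  have [z [Bz Nz]] := cly (B r) N (ex_intro2 _ _ r Dr (@subset_refl _ _)) Ny.
  by exists z.
by exists y; [case: (yB _ (lt_sup_minus1))|move=> r /yB[]].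
Qed.

End SuperlevelSets.

Lemma bounded_closure {R : realType} {n} (A : set 'rV[R]_n) :
  bounded_set A -> bounded_set (closure A).
Proof.
move=> bA; rewrite /bounded_set /bounded_near; near=> M => x clx.
have A_le_M : forall y, A y -> `|y| <= M by near: M.
suff : closure A `<=` closed_ball_ Num.norm (0 : 'rV[R]_n) M.
  by move=> /(_ x clx); rewrite /closed_ball_ /= sub0r normrN.
rewrite closureE; apply: smallest_sub; first exact: closed_closed_ball_.
by move=> y Ay; rewrite /closed_ball_ /= sub0r normrN; exact: A_le_M.
Unshelve. all: by end_near.
Qed.

Lemma exists_superlevel_closure_sub {R : realType} {n} {Omega : set 'rV[R]_n}
    (F : 'rV[R]_n -> R) {x00 : 'rV[R]_n} :
  Omega x00 -> open Omega -> bounded_set Omega ->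
  (forall xs, boundary Omega xs ->
    limf_esup (fun x => (F x)%:E) (within Omega (nbhs xs)) <>
    ereal_sup [set (F x)%:E | x in Omega]%E) ->
  exists r : R, (r%:E < ereal_sup [set (F x)%:E | x in Omega])%E /\
    closure [set x | Omega x /\ r < F x] `<=` Omega.
Proof.
move=> Ox00 oOmega bOmega no_boundary_sup; apply: contrapT => no_r.
have cK : compact (closure Omega).
  by apply: bounded_closed_compact; [exact: bounded_closure|exact: closed_closure].
have [r rs|y nOy yA] := superlevel_closures_meet_outside F Ox00 oOmega cK.
  apply: contrapT => A_in; apply: no_r; exists r; split => // y cy.
  by apply: contrapT => nOy; apply: A_in; exists y.
apply: (no_boundary_sup y); last by have := limf_esup_eq_sup F Ox00 y yA.
split; last by rewrite (proj1 (interior_id _) oOmega).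
by apply: closure_subset (yA _ (lt_sup_minus1 F Ox00)) => x [].
Qed.

Lemma open_superlevel_in {T : topologicalType} {R : realType} (Omega : set T)
    (G : T -> R) (c : R) :
  open Omega -> (forall x, Omega x -> {for x, continuous G}) ->
  open [set x | Omega x /\ c < G x].
Proof.
move=> oOmega cG; rewrite openE => x [Ox cx].
apply: filterI; first by apply: open_nbhs_nbhs; split.
exact: (@cvgr_gt R _ _ _ _ _ (cG x Ox) c cx).
Qed.

Theorem theorem3 (R : realType) (n : nat) (hn : (0 < n)%N)
    (Omega : set 'rV[R]_n) (f : 'rV[R]_n -> 'rV[R]_n) :
  Omega !=set0 -> open Omega -> bounded_set Omega -> C1_on Omega f ->
  convex_hull_like Omega f \/
  exists X : set 'rV[R]_n,
    [/\ X !=set0, open X, closure X `<=` Omega &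
      forall g : 'rV[R]_n -> 'rV[R]_n,
        continuous_on Omega g -> C1_on X g ->
        exists lt : R, 0 <= lt /\
          forall lam : R, lt < lam ->
            exists2 xh, X xh & \det (jacobian (fun x => g x + lam *: f x) xh) = 0].
Proof.
move=> [x00 Ox00] oOmega bOmega [df _].
have cf : continuous_on Omega f by move=> x /df /differentiable_continuous.
have [|not_chl] := pselect (convex_hull_like Omega f); [by left|right].
have [psi [c_psi qc_psi no_boundary_sup]] :
    exists psi, [/\ continuous psi, quasi_convex psi &
    forall xs, boundary Omega xs ->
      limf_esup (fun x => (psi (f x))%:E) (within Omega (nbhs xs)) <>
      ereal_sup [set (psi (f x))%:E | x in Omega]%E].
  apply: contrapT => no_psi; apply: not_chl => psi c_psi qc_psi.
  apply: contrapT => no_xs; apply: no_psi; exists psi; split => // xs bxs sup_xs.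
  by apply: no_xs; exists xs.
have [r [r_lt_sup clA]] :=
  exists_superlevel_closure_sub (fun x => psi (f x)) Ox00 oOmega bOmega no_boundary_sup.
have [_ [x0 Ox0 <-]] := ereal_sup_gt r_lt_sup; rewrite lte_fin => r_lt_x0.
have [u [c [u_neq0 c_lt_x0 sep]]] := quasi_convex_separation hn c_psi qc_psi r_lt_x0.
pose X := [set x | Omega x /\ c < dotv (f x) u].
have clX : closure X `<=` Omega.
  apply: subset_trans clA; apply: closure_subset => x [Ox cx]; split => //.
  by rewrite ltNge; apply: contraTN cx => /sep; rewrite -leNgt.
have oX : open X.
  apply: open_superlevel_in oOmega _ => x Ox.
  by apply: dotv_continuous; [exact: cf|exact: cst_continuous].
exists X; split => //; first by exists x0.
apply: (det_jacobian_eq0_for_large_lambda u x0 (dotv (f x0) u - c)) => //.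
- by rewrite subr_gt0.
- by move=> x [Ox _]; exact: df.
- move=> y /clX Oy Xy_false; rewrite addrCA gerDl subr_le0 leNgt.
  by apply/negP => cy; apply: Xy_false.
Qed.
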